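(* Let $G=(V,E)$ be a finite directed graph, $e\in E$, and $\alpha,\beta\in\{+,-\}$. Then (i) $\mathbb{E}[R^\alpha(e_* )]=\bar R^\alpha(e_* )$ and $\mathbb{E}[R^\beta(e^* )]=\bar R^\beta(e^* )$; (ii) $\mathbb{E}[R^\alpha(e_* )R^\beta(e^* )]=\bar R^\alpha(e_* )\bar R^\beta(e^* )$.
   Context: For a directed graph $G=(V,E)$, $e_*$ and $e^*$ denote the source and target of edge $e$, $D^+(v)$ and $D^-(v)$ the out- and in-degree of $v$. For a finite sequence $(x_i)_{1\le i\le n}$ of reals, the rank is $R(x_j)=|\{i: x_i\ge x_j\}|$ and the average rank is $\bar R(x_j)=|\{i:x_i>x_j\}|+\frac{|\{i:x_i=x_j\}|+1}{2}$. Let $(U_f)_{f\in E}$ and $(W_f)_{f\in E}$ be i.i.d. copies of independent uniform random variables $U$ and $W$ on $(0,1)$. Define $R^\alpha(e_* )$ as the rank $R$ of $D^\alpha(e_* )+U_e$ within the sequence $(D^\alpha(f_* )+U_f)_{f\in E}$, and $R^\beta(e^* )$ as the rank of $D^\beta(e^* )+W_e$ within $(D^\beta(f^* )+W_f)_{f\in E}$. Define $\bar R^\alpha(e_* )$ as the average rank of $D^\alpha(e_* )$ within $(D^\alpha(f_* ))_{f\in E}$ and $\bar R^\beta(e^* )$ as the average rank of $D^\beta(e^* )$ within $(D^\beta(f^* ))_{f\in E}$. *)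

From HB Require Import structures.
From mathcomp Require Import all_boot all_order all_algebra.
From mathcomp Require Import all_classical all_reals all_analysis.
Set Implicit Arguments. Unset Strict Implicit. Unset Printing Implicit Defensive.
Import Order.TTheory GRing.Theory Num.Theory.
Local Open Scope classical_set_scope.
Local Open Scope ring_scope.

Inductive pm := Plus | Minus.

(* A finite directed (multi)graph is given by finite types V, E and
   source/target maps src (e_* ) and tgt (e^* ).  D^+ = out-degree,
   D^- = in-degree. *)
Definition outdeg (V E : finType) (src : E -> V) (v : V) : nat :=
  #|[set f : E | src f == v]|.
Definition indeg (V E : finType) (tgt : E -> V) (v : V) : nat :=
  #|[set f : E | tgt f == v]|.
Definition deg (V E : finType) (src tgt : E -> V) (s : pm) (v : V) : nat :=
  match s with Plus => outdeg src v | Minus => indeg tgt v end.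

Definition rank (R : realType) (I : finType) (x : I -> R) (j : I) : nat :=
  #|[set i : I | x j <= x i]|.

Definition avg_rank (R : realType) (I : finType) (x : I -> R) (j : I) : R :=
  (#|[set i : I | x j < x i]|)%:R
  + ((#|[set i : I | x i == x j]|)%:R + 1) / 2.

Definition uniform01 d (T : measurableType d) (R : realType)
  (P : probability T R) (X : T -> R) : Prop :=
  measurable_fun setT X /\
  forall B : set R, measurable B ->
    P (X @^-1` B) = lebesgue_measure (B `&` `]0, 1[).

Definition mutually_independent d (T : measurableType d) (R : realType)
  (P : probability T R) (I : finType) (X : I -> T -> R) : Prop :=
  (forall i, measurable_fun setT (X i)) /\
  forall (J : {set I}) (B : I -> set R), (forall i, measurable (B i)) ->
    P (\bigcap_(i in [set i | i \in J]) (X i @^-1` B i))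
    = (\prod_(i in J) P (X i @^-1` B i))%E.

Definition UW (T : Type) (R : realType) (E : finType) (U W : E -> T -> R)
  : (E + E)%type -> T -> R :=
  fun i => match i with inl f => U f | inr f => W f end.

From HB Require Import structures.
From mathcomp Require Import all_boot all_order all_algebra.
From mathcomp Require Import all_classical all_reals all_analysis.
From mathcomp Require Import measurable_realfun.
From mathcomp Require Import ring lra.
Import Order.TTheory GRing.Theory Num.Theory.
Local Open Scope classical_set_scope.
Local Open Scope ring_scope.
Set Implicit Arguments. Unset Strict Implicit. Unset Printing Implicit Defensive.

(* Both ranks are sums over edges f of indicators [D e + U_e <= D f + U_f], with
   integer degrees D and perturbations U almost surely in [0, 1[.  Such an
   indicator is almost surely constant unless f <> e and the degrees tie, in
   which case its expectation is 1/2; a product of two non-constant indicators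
   built from disjoint pairs of variables has expectation 1/4.  Summing over the
   edges gives the average ranks and their product.  The values 1/2 and 1/4 are
   obtained by cutting [0, 1[ into n cells of width 1/n: independence applies
   directly to products of cell events, and the comparison of two variables is
   squeezed between the strict and the non-strict comparison of their cell
   indices, whose expectations are (1 -+ 1/n) / 2. *)

Section nonneg_expectation.
Context d (T : measurableType d) (R : realType) (P : probability T R).

Definition nonneg_mfun (h : T -> R) := measurable_fun setT h /\ forall t, 0 <= h t.

Lemma nonneg_mfunM h1 h2 :
  nonneg_mfun h1 -> nonneg_mfun h2 -> nonneg_mfun (fun t => h1 t * h2 t).
Proof.
move=> [m1 p1] [m2 p2]; split; first exact: measurable_funM.
by move=> t; rewrite mulr_ge0.
Qed.

Lemma nonneg_mfunZl c h : 0 <= c -> nonneg_mfun h -> nonneg_mfun (fun t => c * h t).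
Proof.
move=> c0 [mh ph]; split; first exact: measurable_funM.
by move=> t; rewrite mulr_ge0.
Qed.

Lemma nonneg_mfun_sum (I : Type) (s : seq I) (h : I -> T -> R) :
  (forall i, nonneg_mfun (h i)) -> nonneg_mfun (fun t => \sum_(i <- s) h i t).
Proof.
move=> hh; split; first by apply: measurable_sum => i; case: (hh i).
by move=> t; apply: sumr_ge0 => i _; case: (hh i).
Qed.

Lemma nonneg_mfun_cst c : 0 <= c -> nonneg_mfun (cst c).
Proof. by move=> c0; split. Qed.

Lemma nonneg_mfun_natr (b : T -> bool) :
  measurable_fun setT b -> nonneg_mfun (fun t => (b t)%:R).
Proof.
move=> mb; split => [|t]; last exact: ler0n.
rewrite (_ : (fun t => _) = fun t => if b t then 1 else 0).
  exact: measurable_fun_ifT.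
by apply: funext => t; case: (b t).
Qed.

Lemma nonneg_mfun_ler (f g : T -> R) : measurable_fun setT f ->
  measurable_fun setT g -> nonneg_mfun (fun t => (f t <= g t)%R%:R).
Proof. by move=> mf mg; apply: nonneg_mfun_natr; exact: measurable_fun_ler. Qed.

Local Open Scope ereal_scope.

Lemma ge0_expectation_sum (I : Type) (s : seq I) (h : I -> T -> R) :
  (forall i, nonneg_mfun (h i)) ->
  'E_P[fun t => (\sum_(i <- s) h i t)%R] = \sum_(i <- s) 'E_P[h i].
Proof.
move=> hh; rewrite unlock.
under eq_integral do rewrite -sumEFin.
apply: ge0_integral_sum => // i; first by apply/measurable_EFinP; case: (hh i).
by move=> t _; rewrite lee_fin; case: (hh i).
Qed.

Lemma ge0_expectationZl c h : (0 <= c)%R -> nonneg_mfun h ->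
  'E_P[fun t => (c * h t)%R] = c%:E * 'E_P[h].
Proof.
move=> c0 [mh ph]; rewrite unlock.
under eq_integral do rewrite EFinM.
apply: ge0_integralZl => //; first exact/measurable_EFinP.
by move=> t _; rewrite lee_fin.
Qed.

Lemma ge0_le_expectation_ae h1 h2 : nonneg_mfun h1 -> nonneg_mfun h2 ->
  {ae P, forall t, h1 t <= h2 t}%R -> 'E_P[h1] <= 'E_P[h2].
Proof. by move=> [m1 p1] [m2 p2]; exact: expectation_le. Qed.

Lemma ge0_eq_expectation_ae h1 h2 : nonneg_mfun h1 -> nonneg_mfun h2 ->
  {ae P, forall t, h1 t = h2 t} -> 'E_P[h1] = 'E_P[h2].
Proof.
move=> g1 g2 h12; apply/le_anti/andP; split; apply: ge0_le_expectation_ae => //;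
  by apply: filterS h12 => t ->.
Qed.

Lemma ge0_expectation_weighted_sum (J : finType) (w : J -> R) (b : J -> T -> bool) :
  (forall j, 0 <= w j)%R -> (forall j, measurable_fun setT (b j)) ->
  'E_P[fun t => (\sum_j w j * (b j t)%:R)%R]
  = \sum_j (w j)%:E * 'E_P[fun t => (b j t)%:R].
Proof.
move=> w0 mb; rewrite ge0_expectation_sum => [|j]; last first.
  by apply: nonneg_mfunZl => //; exact: nonneg_mfun_natr.
by apply: eq_bigr => j _; rewrite ge0_expectationZl //; exact: nonneg_mfun_natr.
Qed.

End nonneg_expectation.

Lemma ler_natb (R : numDomainType) (a b : bool) : (a -> b) -> (a%:R <= b%:R :> R).
Proof. by case: a; case: b => // /(_ isT). Qed.

Lemma natr_andb (R : pzSemiRingType) (a b : bool) : (a && b)%:R = a%:R * b%:R :> R.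
Proof. by rewrite -natrM mulnb. Qed.

Section cells.
Variables (R : realType) (n : nat).
Hypothesis n_gt0 : (0 < n)%N.

Definition cell (k : nat) : interval R := `[k%:R / n%:R, k.+1%:R / n%:R[.

Definition cell_index (x : R) : nat := Num.truncn (x * n%:R).

Let n_gt0' : (0 : R) < n%:R. Proof. by rewrite ltr0n. Qed.

Lemma in_cell x k : (x \in cell k) = (0 <= x) && (cell_index x == k).
Proof.
rewrite in_itv /= /cell_index; case: (leP 0 x) => x0 /=.
  by rewrite truncn_eq ?mulr_ge0 // ler_pdivrMr // ltr_pdivlMr.
apply/negbTE/negP => /andP[+ _]; apply/negP.
by rewrite -ltNge (lt_le_trans x0) // divr_ge0.
Qed.

Lemma cell_index_lt x : x \in `[0, 1[ -> (cell_index x < n)%N.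
Proof.
rewrite in_itv /= => /andP[x0 x1].
by rewrite /cell_index truncn_lt_nat ?mulr_ge0 // -{2}(mul1r n%:R) ltr_pM2r.
Qed.

Lemma sum_cell x (F : nat -> R) : x \in `[0, 1[ ->
  \sum_(k < n) (x \in cell k)%:R * F k = F (cell_index x).
Proof.
move=> x01; have x0 : 0 <= x by move: x01; rewrite in_itv /= => /andP[].
rewrite (bigD1 (Ordinal (cell_index_lt x01))) //= in_cell x0 eqxx mul1r.
rewrite big1 ?addr0 // => k; rewrite -val_eqE /= in_cell x0 /= eq_sym.
by move/negbTE => ->; rewrite mul0r.
Qed.

Lemma leq_cell_index x y : 0 <= x -> x <= y -> (cell_index x <= cell_index y)%N.
Proof.
move=> x0 xy; rewrite /cell_index truncn_ge_nat ?mulr_ge0 ?(le_trans x0 xy) //.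
apply: (@le_trans _ _ (x * n%:R)); first by rewrite truncn_le mulr_ge0.
by rewrite ler_pM2r.
Qed.

Lemma ltn_cell_index x y : 0 <= y -> (cell_index x < cell_index y)%N -> x <= y.
Proof.
move=> y0; apply: contraTT; rewrite -ltnNge -ltNge => /ltW yx.
by rewrite ltnS leq_cell_index.
Qed.

(* Written as a combination of products of cell indicators, so that its
   expectation can be computed from independence. *)
Definition cell_rel (r : rel nat) (x y : R) : R :=
  \sum_(p : 'I_n * 'I_n) (r p.1 p.2)%:R * ((x \in cell p.1) && (y \in cell p.2))%:R.

Lemma cell_relE r x y : x \in `[0, 1[ -> y \in `[0, 1[ ->
  cell_rel r x y = (r (cell_index x) (cell_index y))%:R.
Proof.
move=> x01 y01; rewrite /cell_rel -(pair_bigA _ (fun k l : 'I_n =>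
  (r k l)%:R * ((x \in cell k) && (y \in cell l))%:R)) /=.
rewrite -(sum_cell (fun k => (r k _)%:R) x01); apply: eq_bigr => k _.
rewrite -(sum_cell (fun l => (r k l)%:R) y01) mulr_sumr; apply: eq_bigr => l _.
by rewrite natr_andb mulrC mulrA.
Qed.

End cells.

Lemma sum_ord_ltn (R : numFieldType) n :
  \sum_(k < n) \sum_(l < n) ((k < l)%N%:R : R) = n%:R * (n%:R - 1) / 2.
Proof.
elim: n => [|n IH]; first by rewrite big_ord0 !mul0r.
rewrite big_ord_recr /= big_ord_recr /=.
under eq_bigr do rewrite big_ord_recr /=.
rewrite big_split /= IH ltnn addr0 -addrA.
rewrite [X in _ + (_ + X)]big1 => [|i _]; last by rewrite ltnNge ltnW.
rewrite (eq_bigr (fun _ => 1)) => [|i _]; last by rewrite ltn_ord.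
by rewrite sumr_const card_ord addr0 -addn1 natrD; field.
Qed.

Lemma sum_ord_leq (R : numFieldType) n :
  \sum_(k < n) \sum_(l < n) ((k <= l)%N%:R : R) = n%:R * (n%:R + 1) / 2.
Proof.
transitivity (\sum_(k < n) (\sum_(l < n) ((k < l)%N%:R : R) + 1)).
  apply: eq_bigr => k _; rewrite (bigD1 k) // [in RHS](bigD1 k) //= leqnn ltnn.
  rewrite add0r addrC; congr (_ + _); apply: eq_bigr => l.
  by rewrite -val_eqE /= leq_eqVlt eq_sym => /negbTE ->.
by rewrite big_split /= sum_ord_ltn sumr_const card_ord; field.
Qed.

Definition rel_density (R : numFieldType) n (r : rel nat) : R :=
  (\sum_(p : 'I_n * 'I_n) (r p.1 p.2)%:R) / n%:R ^+ 2.

Lemma rel_density_ltn (R : numFieldType) n : (0 < n)%N ->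
  rel_density R n ltn = (1 - n%:R^-1) / 2.
Proof.
move=> n0; rewrite /rel_density -(pair_bigA _ (fun k l : 'I_n => (k < l)%N%:R)) sum_ord_ltn; field.
by rewrite pnatr_eq0 -lt0n.
Qed.

Lemma rel_density_leq (R : numFieldType) n : (0 < n)%N ->
  rel_density R n leq = (1 + n%:R^-1) / 2.
Proof.
move=> n0; rewrite /rel_density -(pair_bigA _ (fun k l : 'I_n => (k <= l)%N%:R)) sum_ord_leq; field.
by rewrite pnatr_eq0 -lt0n.
Qed.

Lemma eq_EFin_inv_nat_bounds (R : realType) (v : \bar R) (q : R) :
  (forall n, (0 < n)%N -> ((q - n%:R^-1)%:E <= v <= (q + n%:R^-1)%:E)%E) ->
  v = q%:E.
Proof.
move=> bounds; have inv_nat_lt (e : R) : 0 < e -> exists2 n, (0 < n)%N & n%:R^-1 < e.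
  move=> e0; exists (Num.truncn e^-1).+1 => //.
  by rewrite invf_plt ?posrE ?ltr0n // truncnS_gt.
have /andP[lo hi] := bounds 1%N isT.
case: v lo hi bounds => [x _ _ | //= | //=] bounds; congr EFin.
apply/le_anti/andP; split; apply/ler_addgt0Pr => e /inv_nat_lt[n n0 ne];
  have /andP[+ +] := bounds n n0; rewrite !lee_fin => lo hi; lra.
Qed.

Lemma lebesgue_measure_co_cap_unit (R : realType) (a b : R) :
  0 <= a -> a < b -> b <= 1 ->
  lebesgue_measure ([set` `[a, b[] `&` [set` `]0, 1[]) = (b - a)%:E.
Proof.
move=> a0 ab b1; have mitv (i : interval R) : measurable [set` i].
  exact: measurable_itv.
have leb_oo : lebesgue_measure [set` `]a, b[] = (b - a)%:E.
  by rewrite lebesgue_measure_itv /= lte_fin ab -EFinD.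
have leb_cc : lebesgue_measure [set` `[a, b]] = (b - a)%:E.
  by rewrite lebesgue_measure_itv /= lte_fin ab -EFinD.
apply/le_anti/andP; split.
- rewrite -leb_cc.
  apply: le_measure; rewrite ?inE; [exact: measurableI|exact: mitv|].
  by move=> x [/=]; rewrite !in_itv /= => /andP[-> /ltW ->].
- rewrite -leb_oo.
  apply: le_measure; rewrite ?inE; [exact: mitv|exact: measurableI|].
  move=> x /=; rewrite !in_itv /= => /andP[ax xb]; split => /=.
    by rewrite (ltW ax) xb.
  by rewrite (le_lt_trans a0 ax) (lt_le_trans xb b1).
Qed.

Section uniform01.
Context d (T : measurableType d) (R : realType) (P : probability T R) (X : T -> R).
Hypothesis X_unif : uniform01 P X.

Lemma uniform01_cell n k : (0 < n)%N -> (k < n)%N ->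
  P (X @^-1` [set` cell R n k]) = (n%:R^-1)%:E.
Proof.
move=> n0 kn; rewrite X_unif.2; last exact: measurable_itv.
have n0' : (0 : R) < n%:R by rewrite ltr0n.
rewrite lebesgue_measure_co_cap_unit.
- by rewrite -mulrBl -natrB // subSnn mul1r.
- by rewrite divr_ge0.
- by rewrite ltr_pM2r ?invr_gt0 // ltr_nat.
- by rewrite ler_pdivrMr // mul1r ler_nat.
Qed.

Lemma uniform01_ae_unit : {ae P, forall t, X t \in `[0, 1[}.
Proof.
pose N := X @^-1` (~` [set` `[(0 : R), 1[]).
have mN : measurable N.
  rewrite -[N]setTI; apply: X_unif.1 => //.
  by apply: measurableC; exact: measurable_itv.
exists N; split => //.
rewrite X_unif.2; last by apply: measurableC; exact: measurable_itv.
suff -> : ~` [set` `[0, 1[] `&` [set` `]0, 1[] = set0 :> set R by rewrite measure0.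
apply/seteqP; split => x // [/= + ]; rewrite !in_itv /= => + /andP[x0 x1].
by rewrite (ltW x0) x1.
Qed.

End uniform01.

Definition jitter_le (R : numDomainType) (c1 c2 : nat) (x y : R) : R :=
  (c1%:R + x <= c2%:R + y)%R%:R.

(* The expectation of [jitter_le]; [same] tells whether both perturbations are
   the same random variable. *)
Definition jitter_le_mean (R : numFieldType) (same : bool) (c1 c2 : nat) : R :=
  if same then (c1 <= c2)%:R else if c1 == c2 then 2^-1 else (c1 < c2)%:R.

Lemma jitter_le_mean_ge0 (R : numFieldType) same c1 c2 :
  0 <= jitter_le_mean R same c1 c2.
Proof. by rewrite /jitter_le_mean; case: ifP => _; [|case: ifP => _]. Qed.

Lemma jitter_le_diag (R : numDomainType) c1 c2 (x : R) :
  jitter_le c1 c2 x x = (c1 <= c2)%:R.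
Proof. by rewrite /jitter_le lerD2r ler_nat. Qed.

Lemma jitter_le_eq (R : numDomainType) c (x y : R) :
  jitter_le c c x y = (x <= y)%R%:R.
Proof. by rewrite /jitter_le lerD2l. Qed.

Lemma jitter_le_unit (R : realFieldType) c1 c2 (x y : R) :
  x \in `[0, 1[ -> y \in `[0, 1[ -> c1 != c2 -> jitter_le c1 c2 x y = (c1 < c2)%:R.
Proof.
rewrite !in_itv /= => /andP[x0 x1] /andP[y0 y1] c12; rewrite /jitter_le.
case: ltngtP c12 => // [lt12|lt21] _.
  have le12 : c1%:R + 1 <= c2%:R :> R by rewrite natr1 ler_nat.
  by have -> : c1%:R + x <= c2%:R + y by lra.
have le21 : c2%:R + 1 <= c1%:R :> R by rewrite natr1 ler_nat.
by rewrite leNgt; have -> : c2%:R + y < c1%:R + x by lra.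
Qed.

Lemma natr_card_set (R : pzSemiRingType) (E : finType) (p : pred E) :
  #|[set f | p f]|%:R = \sum_f (p f)%:R :> R.
Proof.
rewrite -sum1_card natr_sum big_mkcond /=; apply: eq_bigr => f _.
have -> : (f \in [set f0 | p f0]) = p f by apply/idP/idP => [/set_mem|/mem_set].
by case: (p f).
Qed.

Lemma rank_natrE (R : realType) (E : finType) (x : E -> R) e :
  (rank x e)%:R = \sum_f (x e <= x f)%R%:R :> R.
Proof. exact: natr_card_set. Qed.

Lemma avg_rank_natrE (R : realType) (E : finType) (D : E -> nat) e :
  avg_rank (fun f => (D f)%:R : R) e = \sum_f jitter_le_mean R (e == f) (D e) (D f).
Proof.
rewrite /avg_rank !natr_card_set; symmetry.
transitivity (\sum_f ((D e < D f)%N%:R + ((D f == D e)%:R + (e == f)%:R) / 2 : R)).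
  apply: eq_bigr => f _; rewrite /jitter_le_mean.
  case: (eqVneq e f) => [<-|ef]; first by rewrite ltnn leqnn eqxx /=; field.
  by rewrite eq_sym; case: eqVneq => [->|_] /=; rewrite ?ltnn ?add0r ?addr0; field.
have sum_eq : \sum_f (e == f)%:R = 1 :> R.
  by rewrite (bigD1 e) //= eqxx big1 ?addr0 // => f; rewrite eq_sym => /negbTE ->.
rewrite big_split /= -mulr_suml big_split /= sum_eq.
congr (_ + (_ + _) / 2); apply: eq_bigr => f _.
  by rewrite ltr_nat.
by rewrite eqr_nat.
Qed.

Section independent_uniforms.
Context d (T : measurableType d) (R : realType) (P : probability T R).
Context (I : finType) (X : I -> T -> R).
Hypothesis X_unif : forall i, uniform01 P (X i).
Hypothesis X_indep : mutually_independent P X.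

Let mX i : measurable_fun setT (X i). Proof. exact: X_indep.1. Qed.

Let inv_nat_unit n : (0 < n)%N -> 0 < (n%:R^-1 : R) <= 1.
Proof. by move=> n0; rewrite invr_gt0 ltr0n n0 invf_le1 ?ler1n ?ltr0n. Qed.

Let unit_ge0 (x : R) : x \in `[0, 1[ -> 0 <= x.
Proof. by rewrite in_itv /= => /andP[]. Qed.

Lemma ae_unit : {ae P, forall t, forall i, X i t \in `[0, 1[}.
Proof. by apply: filter_forall => i; exact: uniform01_ae_unit. Qed.

Lemma measurable_in_itv i (J : interval R) : measurable_fun setT (fun t => X i t \in J).
Proof.
apply: (measurable_fun_bool true).
exact: (mX i) measurableT _ (measurable_itv J).
Qed.

Local Open Scope ereal_scope.

Lemma expectation_all_in (s : seq I) (B : I -> interval R) : uniq s ->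
  'E_P[fun t => (all (fun i => X i t \in B i) s)%:R]
  = \prod_(i <- s) P (X i @^-1` [set` B i]).
Proof.
move=> s_uniq; pose A := \bigcap_(i in [set i | i \in [set i in s]]) X i @^-1` [set` B i].
have mA : measurable A.
  apply: fin_bigcap_measurable => [|i _]; first exact: finite_finset.
  by rewrite -[_ @^-1` _]setTI; apply: (mX i) => //; exact: measurable_itv.
have -> : (fun t => (all (fun i => X i t \in B i) s)%:R) = \1_A :> (T -> R).
  apply/funext => t; rewrite indicE; congr (nat_of_bool _)%:R.
  apply/allP/idP => [Bt|/set_mem At i si]; last by apply: At; rewrite /= inE.
  by apply/mem_set => i /=; rewrite inE; exact: Bt.
rewrite expectation_indic // (X_indep.2 _ (fun i => [set` B i])) => [|i]; last first.
  exact: measurable_itv.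
by rewrite (big_uniq _ s_uniq); apply: eq_bigl => i; rewrite inE.
Qed.

Lemma expectation_in2 i j (A B : interval R) : i != j ->
  'E_P[fun t => ((X i t \in A) && (X j t \in B))%:R]
  = P (X i @^-1` [set` A]) * P (X j @^-1` [set` B]).
Proof.
move=> ij; pose C m := if m == i then A else B.
have -> : (fun t => ((X i t \in A) && (X j t \in B))%:R)
    = (fun t => (all (fun m => X m t \in C m) [:: i; j])%:R) :> (T -> R).
  by apply/funext => t; rewrite /= /C eqxx eq_sym (negbTE ij) andbT.
rewrite expectation_all_in /= ?inE ?ij // !big_cons big_nil mule1.
by rewrite /C eqxx eq_sym (negbTE ij).
Qed.

Lemma expectation_in4 i1 i2 i3 i4 (A1 A2 A3 A4 : interval R) :
  uniq [:: i1; i2; i3; i4] ->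
  'E_P[fun t => (((X i1 t \in A1) && (X i2 t \in A2)) &&
                 ((X i3 t \in A3) && (X i4 t \in A4)))%:R]
  = P (X i1 @^-1` [set` A1]) * P (X i2 @^-1` [set` A2]) *
    (P (X i3 @^-1` [set` A3]) * P (X i4 @^-1` [set` A4])).
Proof.
move=> u; pose C m := if m == i1 then A1 else if m == i2 then A2
  else if m == i3 then A3 else A4.
have [C1 C2 C3 C4] : [/\ C i1 = A1, C i2 = A2, C i3 = A3 & C i4 = A4].
  move: u; rewrite /= !inE !negb_or /C.
  move=> /andP[/and3P[n12 n13 n14] /andP[/andP[n23 n24] /andP[n34 _]]].
  by rewrite !eqxx !(eq_sym i2) !(eq_sym i3) !(eq_sym i4)
    (negbTE n12) (negbTE n13) (negbTE n14) (negbTE n23) (negbTE n24) (negbTE n34).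
have -> : (fun t => (((X i1 t \in A1) && (X i2 t \in A2)) &&
                     ((X i3 t \in A3) && (X i4 t \in A4)))%:R)
    = (fun t => (all (fun m => X m t \in C m) [:: i1; i2; i3; i4])%:R) :> (T -> R).
  by apply/funext => t; rewrite /= C1 C2 C3 C4 andbT !andbA.
rewrite expectation_all_in // !big_cons big_nil mule1 C1 C2 C3 C4.
by rewrite !muleA.
Qed.

Lemma nonneg_mfun_cell_rel n r i j :
  nonneg_mfun (fun t => cell_rel n r (X i t) (X j t)).
Proof.
apply: nonneg_mfun_sum => p; apply: nonneg_mfunZl; first exact: ler0n.
by apply: nonneg_mfun_natr; apply: measurable_and; exact: measurable_in_itv.
Qed.

Lemma expectation_cell_rel n r i j : (0 < n)%N -> i != j ->
  'E_P[fun t => cell_rel n r (X i t) (X j t)] = (rel_density R n r)%:E.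
Proof.
move=> n0 ij; rewrite ge0_expectation_weighted_sum => [|p|p]; last 2 first.
- exact: ler0n.
- by apply: measurable_and; exact: measurable_in_itv.
under eq_bigr do rewrite expectation_in2 // !uniform01_cell // -!EFinM.
rewrite sumEFin /rel_density mulr_suml; congr EFin.
by apply: eq_bigr => p _; rewrite expr2 invfM.
Qed.

Lemma expectation_cell_relM n r r' i1 i2 i3 i4 : (0 < n)%N ->
  uniq [:: i1; i2; i3; i4] ->
  'E_P[fun t => (cell_rel n r (X i1 t) (X i2 t) * cell_rel n r' (X i3 t) (X i4 t))%R]
  = (rel_density R n r * rel_density R n r')%:E.
Proof.
move=> n0 u.
have -> : (fun t => cell_rel n r (X i1 t) (X i2 t) * cell_rel n r' (X i3 t) (X i4 t))%R
  = (fun t => \sum_(pq : ('I_n * 'I_n) * ('I_n * 'I_n))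
       ((r pq.1.1 pq.1.2)%:R * (r' pq.2.1 pq.2.2)%:R) *
       (((X i1 t \in cell R n pq.1.1) && (X i2 t \in cell R n pq.1.2)) &&
        ((X i3 t \in cell R n pq.2.1) && (X i4 t \in cell R n pq.2.2)))%:R)%R.
  apply/funext => t; rewrite /cell_rel mulr_suml.
  under eq_bigr do rewrite mulr_sumr.
  rewrite pair_bigA; apply: eq_bigr => pq _.
  by rewrite mulrACA [in RHS]natr_andb.
rewrite ge0_expectation_weighted_sum => [|pq|pq]; last 2 first.
- by rewrite mulr_ge0.
- by do 2 apply: measurable_and; exact: measurable_in_itv.
under eq_bigr do rewrite expectation_in4 // !uniform01_cell // -!EFinM.
rewrite sumEFin /rel_density; congr EFin.
rewrite [RHS]mulrACA expr2 invfM -mulr_suml; congr (_ * _)%R.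
symmetry; rewrite mulr_suml; under eq_bigr do rewrite mulr_sumr.
by rewrite pair_bigA.
Qed.

Lemma expectation_le_half i j : i != j ->
  'E_P[fun t => (X i t <= X j t)%R%:R] = (2^-1)%:E.
Proof.
move=> ij; apply: eq_EFin_inv_nat_bounds => n n0.
have /andP[e0 e1] := inv_nat_unit n0.
have lo : 'E_P[fun t => cell_rel n ltn (X i t) (X j t)] <=
          'E_P[fun t => (X i t <= X j t)%R%:R].
  apply: ge0_le_expectation_ae; [exact: nonneg_mfun_cell_rel|exact: nonneg_mfun_ler|].
  apply: filterS ae_unit => t Xt; rewrite (cell_relE n0 _ (Xt i) (Xt j)).
  apply: ler_natb => lt_ij; exact: (ltn_cell_index n0 (unit_ge0 (Xt j)) lt_ij).
have hi : 'E_P[fun t => (X i t <= X j t)%R%:R] <=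
          'E_P[fun t => cell_rel n leq (X i t) (X j t)].
  apply: ge0_le_expectation_ae; [exact: nonneg_mfun_ler|exact: nonneg_mfun_cell_rel|].
  apply: filterS ae_unit => t Xt; rewrite (cell_relE n0 _ (Xt i) (Xt j)).
  apply: ler_natb => le_ij; exact: (leq_cell_index n0 (unit_ge0 (Xt i)) le_ij).
rewrite expectation_cell_rel // rel_density_ltn // in lo.
rewrite expectation_cell_rel // rel_density_leq // in hi.
apply/andP; split; [apply: le_trans lo|apply: le_trans hi _]; rewrite lee_fin; lra.
Qed.

Lemma expectation_le_le_quarter i1 i2 i3 i4 : uniq [:: i1; i2; i3; i4] ->
  'E_P[fun t => ((X i1 t <= X i2 t)%R%:R * (X i3 t <= X i4 t)%R%:R)%R] = (4^-1)%:E.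
Proof.
move=> u; apply: eq_EFin_inv_nat_bounds => n n0.
have /andP[e0 e1] := inv_nat_unit n0.
have mle : nonneg_mfun (fun t => ((X i1 t <= X i2 t)%R%:R * (X i3 t <= X i4 t)%R%:R : R)%R).
  by apply: nonneg_mfunM; exact: nonneg_mfun_ler.
have lo : 'E_P[fun t => (cell_rel n ltn (X i1 t) (X i2 t) *
                         cell_rel n ltn (X i3 t) (X i4 t))%R] <=
          'E_P[fun t => ((X i1 t <= X i2 t)%R%:R * (X i3 t <= X i4 t)%R%:R)%R].
  apply: ge0_le_expectation_ae => //; first by apply: nonneg_mfunM; exact: nonneg_mfun_cell_rel.
  apply: filterS ae_unit => t Xt; rewrite !(cell_relE n0 _ (Xt _) (Xt _)) -!natr_andb.
  apply: ler_natb => /andP[le12 le34].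
  by rewrite (ltn_cell_index n0 (unit_ge0 (Xt i2)) le12)
    (ltn_cell_index n0 (unit_ge0 (Xt i4)) le34).
have hi : 'E_P[fun t => ((X i1 t <= X i2 t)%R%:R * (X i3 t <= X i4 t)%R%:R)%R] <=
          'E_P[fun t => (cell_rel n leq (X i1 t) (X i2 t) *
                         cell_rel n leq (X i3 t) (X i4 t))%R].
  apply: ge0_le_expectation_ae => //; first by apply: nonneg_mfunM; exact: nonneg_mfun_cell_rel.
  apply: filterS ae_unit => t Xt; rewrite !(cell_relE n0 _ (Xt _) (Xt _)) -!natr_andb.
  apply: ler_natb => /andP[le12 le34].
  by rewrite (leq_cell_index n0 (unit_ge0 (Xt i1)) le12)
    (leq_cell_index n0 (unit_ge0 (Xt i3)) le34).
rewrite expectation_cell_relM // rel_density_ltn // in lo.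
rewrite expectation_cell_relM // rel_density_leq // in hi.
apply/andP; split; [apply: le_trans lo|apply: le_trans hi _]; rewrite lee_fin; nra.
Qed.

Lemma nonneg_mfun_jitter_le i j c1 c2 :
  nonneg_mfun (fun t => jitter_le c1 c2 (X i t) (X j t)).
Proof. by apply: nonneg_mfun_ler; apply: measurable_funD. Qed.

Lemma jitter_le_ae_mean i j c1 c2 : (i == j) || (c1 != c2) ->
  {ae P, forall t, jitter_le c1 c2 (X i t) (X j t) = jitter_le_mean R (i == j) c1 c2}.
Proof.
move=> degenerate; apply: filterS ae_unit => t Xt; rewrite /jitter_le_mean.
case: eqP degenerate => [<- _|_ /= c12]; first exact: jitter_le_diag.
by rewrite (negbTE c12) (jitter_le_unit (Xt i) (Xt j) c12).
Qed.

Lemma expectation_jitter_le i j c1 c2 :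
  'E_P[fun t => jitter_le c1 c2 (X i t) (X j t)] = (jitter_le_mean R (i == j) c1 c2)%:E.
Proof.
have [degenerate|] := boolP ((i == j) || (c1 != c2)).
  rewrite -(expectation_cst P); apply: ge0_eq_expectation_ae.
  - exact: nonneg_mfun_jitter_le.
  - exact/nonneg_mfun_cst/jitter_le_mean_ge0.
  - exact: jitter_le_ae_mean.
rewrite negb_or negbK => /andP[ij /eqP <-]; rewrite /jitter_le_mean (negbTE ij) eqxx.
rewrite -(expectation_le_half ij); congr 'E_P[_]; apply/funext => t.
exact: jitter_le_eq.
Qed.

Lemma expectation_jitter_leM_degenerate i j i' j' c1 c2 c1' c2' :
  (i == j) || (c1 != c2) ->
  'E_P[fun t => (jitter_le c1 c2 (X i t) (X j t) * jitter_le c1' c2' (X i' t) (X j' t))%R]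
  = (jitter_le_mean R (i == j) c1 c2 * jitter_le_mean R (i' == j') c1' c2')%:E.
Proof.
move=> degenerate; rewrite EFinM -(expectation_jitter_le i' j') -ge0_expectationZl.
- apply: ge0_eq_expectation_ae.
  + by apply: nonneg_mfunM; exact: nonneg_mfun_jitter_le.
  + by apply: nonneg_mfunZl; [exact: jitter_le_mean_ge0|exact: nonneg_mfun_jitter_le].
  + by apply: filterS (jitter_le_ae_mean degenerate) => t ->.
- exact: jitter_le_mean_ge0.
- exact: nonneg_mfun_jitter_le.
Qed.

Lemma expectation_jitter_leM i j i' j' c1 c2 c1' c2' :
  i != i' -> i != j' -> j != i' -> j != j' ->
  'E_P[fun t => (jitter_le c1 c2 (X i t) (X j t) * jitter_le c1' c2' (X i' t) (X j' t))%R]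
  = (jitter_le_mean R (i == j) c1 c2 * jitter_le_mean R (i' == j') c1' c2')%:E.
Proof.
move=> ii' ij' ji' jj'.
have [degenerate|] := boolP ((i == j) || (c1 != c2)).
  exact: expectation_jitter_leM_degenerate.
have [degenerate' _|] := boolP ((i' == j') || (c1' != c2')).
  rewrite mulrC -expectation_jitter_leM_degenerate //.
  by congr 'E_P[_]; apply/funext => t; rewrite mulrC.
rewrite !negb_or !negbK => /andP[i'j' /eqP <-] /andP[ij /eqP <-].
rewrite /jitter_le_mean (negbTE ij) (negbTE i'j') !eqxx -invfM -natrM.
rewrite -(expectation_le_le_quarter (i1 := i) (i2 := j) (i3 := i') (i4 := j'));
  last by rewrite /= !inE !negb_or ij ii' ij' ji' jj' i'j'.
by congr 'E_P[_]; apply/funext => t; rewrite !jitter_le_eq.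
Qed.

Lemma expectation_jitter_rank (E : finType) (u : E -> I) (D : E -> nat) e :
  injective u ->
  'E_P[fun t => (\sum_f jitter_le (D e) (D f) (X (u e) t) (X (u f) t))%R]
  = (avg_rank (fun f => (D f)%:R : R) e)%:E.
Proof.
move=> u_inj; rewrite ge0_expectation_sum => [|f]; last exact: nonneg_mfun_jitter_le.
under eq_bigr do rewrite expectation_jitter_le (inj_eq u_inj).
by rewrite sumEFin avg_rank_natrE.
Qed.

Lemma expectation_jitter_rankM (E : finType) (u w : E -> I) (Du Dw : E -> nat) e :
  injective u -> injective w -> (forall f g, u f != w g) ->
  'E_P[fun t => ((\sum_f jitter_le (Du e) (Du f) (X (u e) t) (X (u f) t)) *
                 (\sum_g jitter_le (Dw e) (Dw g) (X (w e) t) (X (w g) t)))%R]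
  = (avg_rank (fun f => (Du f)%:R : R) e * avg_rank (fun g => (Dw g)%:R : R) e)%:E.
Proof.
move=> u_inj w_inj uw; under eq_fun do rewrite mulr_suml.
rewrite ge0_expectation_sum => [|f]; last first.
  apply: nonneg_mfunM; first exact: nonneg_mfun_jitter_le.
  by apply: nonneg_mfun_sum => g; exact: nonneg_mfun_jitter_le.
rewrite !avg_rank_natrE mulr_suml -sumEFin; apply: eq_bigr => f _.
under eq_fun do rewrite mulr_sumr.
rewrite ge0_expectation_sum => [|g]; last by apply: nonneg_mfunM; exact: nonneg_mfun_jitter_le.
rewrite mulr_sumr -sumEFin; apply: eq_bigr => g _.
by rewrite expectation_jitter_leM // (inj_eq u_inj) (inj_eq w_inj).
Qed.

End independent_uniforms.

Theorem lemma4p4 (R : realType) (d : measure_display) (T : measurableType d)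
  (P : probability T R) (V E : finType) (src tgt : E -> V)
  (U W : E -> T -> R)
  (hU : forall f, uniform01 P (U f)) (hW : forall f, uniform01 P (W f))
  (hind : mutually_independent P (UW U W))
  (e : E) (a b : pm) :
  let Ra := fun t => ((rank (fun f => (deg src tgt a (src f))%:R + U f t) e)%:R : R) in
  let Rb := fun t => ((rank (fun f => (deg src tgt b (tgt f))%:R + W f t) e)%:R : R) in
  let barRa := avg_rank (fun f => ((deg src tgt a (src f))%:R : R)) e in
  let barRb := avg_rank (fun f => ((deg src tgt b (tgt f))%:R : R)) e in
  ((\int[P]_t (Ra t)%:E = barRa%:E)%E /\ (\int[P]_t (Rb t)%:E = barRb%:E)%E) /\
  (\int[P]_t (Ra t * Rb t)%:E = (barRa * barRb)%:E)%E.
Proof.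
move=> Ra Rb barRa barRb.
have X_unif : forall i, uniform01 P (UW U W i) by case.
have intE (h : T -> R) : (\int[P]_t (h t)%:E = 'E_P[h])%E by rewrite unlock.
pose Da f := deg src tgt a (src f); pose Db f := deg src tgt b (tgt f).
have RaE : Ra = fun t =>
    \sum_f jitter_le (Da e) (Da f) (UW U W (inl e) t) (UW U W (inl f) t).
  by apply/funext => t; rewrite /Ra rank_natrE.
have RbE : Rb = fun t =>
    \sum_f jitter_le (Db e) (Db f) (UW U W (inr e) t) (UW U W (inr f) t).
  by apply/funext => t; rewrite /Rb rank_natrE.
have inl_inj : injective (@inl E E) by move=> ? ? [].
have inr_inj : injective (@inr E E) by move=> ? ? [].
rewrite (intE Ra) (intE Rb) (intE (fun t => Ra t * Rb t)) RaE RbE.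
split; [split|]; [exact: expectation_jitter_rank|exact: expectation_jitter_rank|].
exact: expectation_jitter_rankM.
Qed.
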